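(* Let $F\neq\mathbb{RP}^2$ be a surface, $D$ a link diagram in $F$ with ordered crossings, and $\bar D$ its mirror image (all crossings switched), with crossings ordered consistently: if $v$ is the $i$-th crossing of $D$ then the corresponding crossing $\bar v$ is the $i$-th crossing of $\bar D$. Let $\varphi:C_{ijs}(D)\to C_{-i,-j,-s}(\bar D)$ send an enhanced state $S$ of $D$ to the enhanced state $\varphi(S)$ of $\bar D$ in which each crossing $\bar v$ receives the marker opposite to the marker of $v$ in $S$ (so that the circles of $S$ and $\varphi(S)$ are naturally identified) and every circle receives the label opposite to its label in $S$. Then $\varphi\circ\tilde d=d^+\circ\varphi$ as maps $C_{ijs}(D)\to C_{-i-2,-j,-s}(\bar D)$, where $\tilde d(S)=\sum_{S'}\sum_v(-1)^{t(S,v)}[S':S]_vS'$ (sum over enhanced states $S'$ of $D$ and crossings $v$ of $D$) and $d^+$ on $C(\bar D)$ is $d^+(T)=\sum_{w}(-1)^{t^+(T,w)}d_w(T)$.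
   Context: A link diagram in $F$ is a finite collection of generically immersed closed curves with finitely many crossings with over/under information. The $(+1)$-/$(-1)$-smoothing of a crossing is the one with coefficient $A$/$A^{-1}$ in $L_p=AL_0+A^{-1}L_\infty$. An enhanced state assigns markers $\pm1$ to crossings and labels $\pm$ to the resulting circles. A circle is trivial if it bounds a disk in $F$, bounding if it bounds a disk or a Möbius band; $\mathcal C(F)$ = unoriented unbounding simple closed curves in $F$ up to homotopy. $I(S)=\#\{+1\}-\#\{-1\}$ markers, $\tau(S)=\#$(trivial circles labeled $+$)$-\#$(trivial labeled $-$), $J=I+2\tau$, $\Psi(S)=\sum\varepsilon_k\gamma_k\in\mathbb Z\mathcal C(F)$ over unbounding circles with labels $\varepsilon_k$. $C_{ijs}(D)$ is free abelian on enhanced states with $(I,J,\Psi)=(i,j,s)$. $[S:S']_v=1$ iff (a) $v$ has marker $+1$ in $S$ and $-1$ in $S'$, (b) other markers agree, (c) circles common to $S,S'$ have equal labels, (d) $J(S)=J(S')$, $\Psi(S)=\Psi(S')$; else $0$. $d_v(S)=\sum_{S'}[S:S']_vS'$; $t(S,v)$ (resp. $t^+(S,v)$) = number of $-1$ (resp. $+1$) markers of $S$ at crossings greater than $v$. *)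

From HB Require Import structures.
From mathcomp Require Import all_boot all_order all_algebra.
Set Implicit Arguments. Unset Strict Implicit. Unset Printing Implicit Defensive.
Import Order.TTheory GRing.Theory Num.Theory.
Local Open Scope ring_scope.

(* Geometric type of a simple closed curve in F: bounds a disk (trivial),
   bounds a Moebius band but no disk, or unbounding with its (unoriented)
   homotopy class in C(F). *)
Inductive ckind (Cls : Type) := Trivial | Moebius | Unbounding of Cls.
Arguments Trivial {Cls}. Arguments Moebius {Cls}.

(* A link diagram in F with crossings ordered as 'I_ncross.
   - Curve : the finitely many simple closed curves of F that occur as
     circles of some smoothing of the diagram (identified as curves);
   - kind  : their topological type in F (depends only on the curve);
   - circles g : the set of circles obtained by smoothing crossing v in the
     geometric way g v (the two local smoothings at each crossing being
     labelled false/true independently of over/under information);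
   - over v : which geometric smoothing at v is the A-smoothing (the
     (+1)-smoothing); this is where the over/under information enters. *)
Record diagram := Diagram {
  ncross : nat;
  Curve : finType;
  Cls : eqType;
  kind : Curve -> ckind Cls;
  circles : {ffun 'I_ncross -> bool} -> {set Curve};
  over : 'I_ncross -> bool }.

(* Mirror image: every crossing switched, crossings kept in the same order;
   switching a crossing exchanges its A- and B-smoothings. *)
Definition mirror (D : diagram) : diagram :=
  @Diagram (ncross D) (Curve D) (Cls D) (@kind D) (@circles D)
           (fun v => ~~ @over D v).

(* An enhanced state: markers (true = +1, false = -1) and labels
   (true = +, false = -) of curves; labels of curves which are not circles
   of the state are required to be false (canonical representative). *)
Definition estate (D : diagram) : finType :=
  ({ffun 'I_(ncross D) -> bool} * {ffun Curve D -> bool})%type.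

Section States.
Variable D : diagram.
Implicit Types S T : estate D.

Definition geo (m : {ffun 'I_(ncross D) -> bool}) : {ffun 'I_(ncross D) -> bool} :=
  [ffun v => m v == over v].

Definition circ S : {set Curve D} := circles (geo S.1).

Definition valid S : bool := [forall c, (c \notin circ S) ==> ~~ S.2 c].

Definition sgn (b : bool) : int := if b then 1 else -1.

Definition Iidx S : int := \sum_(v < ncross D) sgn (S.1 v).

Definition is_trivial (c : Curve D) : bool :=
  if kind c is Trivial then true else false.

Definition has_class (g : Cls D) (c : Curve D) : bool :=
  if kind c is Unbounding g' then g' == g else false.

Definition tau S : int := \sum_(c in circ S | is_trivial c) sgn (S.2 c).

Definition Jidx S : int := Iidx S + 2 * tau S.

(* Psi(S) in Z C(F), as the function giving the coefficient of each class *)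
Definition Psi S (g : Cls D) : int :=
  \sum_(c in circ S | has_class g c) sgn (S.2 c).

(* Psi S = Psi T as elements of Z C(F); both vanish outside the classes
   of curves, so it suffices to compare at those. *)
Definition Psi_eq S T : bool :=
  [forall c, if kind c is Unbounding g then Psi S g == Psi T g else true].

Definition incid (v : 'I_(ncross D)) S S' : bool :=
  [&& valid S, valid S', S.1 v, ~~ S'.1 v,
      [forall w, (w != v) ==> (S.1 w == S'.1 w)],
      [forall c, ((c \in circ S) && (c \in circ S')) ==> (S.2 c == S'.2 c)],
      Jidx S == Jidx S' & Psi_eq S S'].

Definition t_minus S (v : 'I_(ncross D)) : nat := #|[set w : 'I_(ncross D) | (v < w)%N & ~~ S.1 w]|.
Definition t_plus S (v : 'I_(ncross D)) : nat := #|[set w : 'I_(ncross D) | (v < w)%N & S.1 w]|.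

Definition chain := {ffun estate D -> int}.

Definition b2z (b : bool) : int := if b then 1 else 0.

Definition dv (v : 'I_(ncross D)) S : chain := [ffun S' => b2z (incid v S S')].

Definition dplus S : chain :=
  [ffun S' => \sum_(v < ncross D) (-1) ^+ t_plus S v * dv v S S'].

Definition dtilde S : chain :=
  [ffun S' => \sum_(v < ncross D) (-1) ^+ t_minus S v * b2z (incid v S' S)].

End States.

Definition phiS (D : diagram) (S : estate D) : estate (mirror D) :=
  ([ffun v => ~~ S.1 v], [ffun c => (c \in circ S) && ~~ S.2 c]).

Definition phiL (D : diagram) (x : chain D) : chain (mirror D) :=
  [ffun T => \sum_(S : estate D | valid S && (phiS S == T)) x S].

From Pilot Require Import Defs.
From HB Require Import structures.
From mathcomp Require Import all_boot all_order all_algebra.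
Import Order.TTheory GRing.Theory Num.Theory.
Local Open Scope ring_scope.

(* Reversing every marker and every label gives the same circles (the mirror
   exchanges the A- and B-smoothings) and negates I, tau, J and Psi, while it
   exchanges the two sides of each incidence [S':S]_v and turns t into t^+.
   On valid states phi is a bijection, so it intertwines d~ and d^+.  An
   incidence switches one marker from +1 to -1 and keeps J and Psi, which
   gives the degree (-i-2, -j, -s) of the image. *)

Set Implicit Arguments.
Unset Strict Implicit.

Lemma sgnN (b : bool) : sgn (~~ b) = - sgn b.
Proof. by case: b. Qed.

Section Incidence.
Variable D : diagram.
Implicit Types S T : estate D.

Lemma incid_valid_r v S T : incid v S T -> valid T.
Proof. by case/and3P. Qed.

Lemma dplus_neq0_incid S T : dplus S T != 0 -> exists v, incid v S T.
Proof.
rewrite ffunE; case: (pickP (fun v => incid v S T)) => [v incT _ | noinc].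
  by exists v.
by rewrite big1 ?eqxx // => v _; rewrite ffunE noinc mulr0.
Qed.

Lemma incid_Iidx v S T : incid v S T -> Iidx T = Iidx S - 2.
Proof.
case/and5P=> _ _ Sv Tv /andP[/forallP eqST _].
rewrite /Iidx (bigD1 v) //= [in RHS](bigD1 v) //= Sv (negbTE Tv).
rewrite (eq_bigr (fun w => sgn (S.1 w))); last first.
  by move=> w wv; move/implyP: (eqST w) => /(_ wv) /eqP ->.
by rewrite /sgn addrC [1 + _]addrC -addrA.
Qed.

Lemma incid_Jidx v S T : incid v S T -> Jidx T = Jidx S.
Proof. by case/and5P=> _ _ _ _ /and4P[_ _ /eqP-> _]. Qed.

Lemma incid_Psi v S T g : incid v S T -> Psi T g = Psi S g.
Proof.
case/and5P=> _ _ _ _ /and4P[_ _ _ /forallP eqPsi].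
case: (pickP (has_class g)) => [c | noclass].
  rewrite /has_class; case kc: (kind c) => [||g'] // /eqP <-.
  by move: (eqPsi c); rewrite kc => /eqP.
by rewrite /Psi !big1 // => c /andP[_]; rewrite noclass.
Qed.

End Incidence.

Section Mirror.
Variable D : diagram.
Implicit Types S : estate D.

Lemma circ_phiS S : circ (phiS S) = circ S.
Proof.
by congr circles; apply/ffunP=> v; rewrite !ffunE /= (inj_eq negb_inj).
Qed.

Lemma valid_phiS S : valid (phiS S).
Proof. by apply/forallP=> c; rewrite circ_phiS ffunE; case: (c \in _). Qed.

Lemma Iidx_phiS S : Iidx (phiS S) = - Iidx S.
Proof. by rewrite /Iidx -sumrN; apply: eq_bigr => v _; rewrite ffunE sgnN. Qed.

Lemma tau_phiS S : tau (phiS S) = - tau S.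
Proof.
rewrite /tau circ_phiS -sumrN; apply: eq_bigr => c /andP[cS _].
by rewrite ffunE cS sgnN.
Qed.

Lemma Jidx_phiS S : Jidx (phiS S) = - Jidx S.
Proof. by rewrite /Jidx Iidx_phiS tau_phiS mulrN opprD. Qed.

Lemma Psi_phiS S g : Psi (phiS S) g = - Psi S g.
Proof.
rewrite /Psi circ_phiS -sumrN; apply: eq_bigr => c /andP[cS _].
by rewrite ffunE cS sgnN.
Qed.

Lemma t_plus_phiS S v : t_plus (phiS S) v = t_minus S v.
Proof. by apply: eq_card => w; rewrite !inE ffunE. Qed.

Lemma incid_phiS (v : 'I_(ncross D)) S S' : valid S -> valid S' ->
  incid (D := mirror D) v (phiS S) (phiS S') = incid (D := D) v S' S.
Proof.
move=> vS vS'; rewrite /incid !valid_phiS vS vS' !Jidx_phiS eqr_opp [Jidx S == _]eq_sym.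
have -> : [forall w, (w != v) ==> ((phiS S).1 w == (phiS S').1 w)]
        = [forall w, (w != v) ==> (S'.1 w == S.1 w)].
  by apply: eq_forallb => w; rewrite /= !ffunE; case: (S.1 w); case: (S'.1 w).
have -> : [forall c, (c \in circ (phiS S)) && (c \in circ (phiS S'))
                       ==> ((phiS S).2 c == (phiS S').2 c)]
        = [forall c, (c \in circ S') && (c \in circ S) ==> (S'.2 c == S.2 c)].
  apply: eq_forallb => c; rewrite !circ_phiS /= !ffunE andbC.
  by case: (c \in circ S'); case: (c \in circ S); case: (S.2 c); case: (S'.2 c).
have -> : Psi_eq (phiS S) (phiS S') = Psi_eq S' S.
  by apply: eq_forallb => c /=; case: (kind c) => // g; rewrite !Psi_phiS eqr_opp eq_sym.
by rewrite !ffunE negbK; case: (S.1 v); case: (S'.1 v).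
Qed.

(* The inverse of phiS on valid states; it is phiS itself read in the mirror,
   since mirror (mirror D) only differs from D by a double negation. *)
Definition phiS_inv (T : estate (mirror D)) : estate D :=
  ([ffun v => ~~ T.1 v], [ffun c => (c \in circ T) && ~~ T.2 c]).

Lemma circ_phiS_inv T : circ (phiS_inv T) = circ T.
Proof.
by congr circles; apply/ffunP=> v; rewrite !ffunE /=; case: (T.1 v); case: (Defs.over v).
Qed.

Lemma valid_phiS_inv T : valid (phiS_inv T).
Proof. by apply/forallP=> c; rewrite circ_phiS_inv ffunE; case: (c \in _). Qed.

Lemma phiS_invK T : valid T -> phiS (phiS_inv T) = T.
Proof.
case: T => m l /forallP vT; congr pair; apply/ffunP=> x; rewrite !ffunE ?negbK //.
rewrite circ_phiS_inv; move: (vT x).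
by case: (x \in circ _) => /=; [rewrite negbK | move/negbTE->].
Qed.

Lemma phiS_inj S1 S2 : valid S1 -> valid S2 -> phiS S1 = phiS S2 -> S1 = S2.
Proof.
case: S1 S2 => [m1 l1] [m2 l2] /forallP v1 /forallP v2 [/ffunP Em /ffunP El].
have {}Em : m1 = m2.
  by apply/ffunP=> x; move: (Em x); rewrite !ffunE; apply: negb_inj.
subst m2; congr pair; apply/ffunP=> c; move: (El c) (v1 c) (v2 c); rewrite !ffunE.
by rewrite /circ /=; case: (c \in _) => //= [/negb_inj | _ /negbTE-> /negbTE->].
Qed.

Lemma phiLE (x : chain D) T : phiL x T = if valid T then x (phiS_inv T) else 0.
Proof.
rewrite ffunE; case: ifP => vT.
  rewrite (big_pred1 (phiS_inv T)) // => S; apply/andP/eqP => [[vS /eqP phiST] | ->].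
    by apply: phiS_inj; rewrite ?valid_phiS_inv ?phiS_invK.
  by rewrite valid_phiS_inv phiS_invK.
by rewrite big_pred0 // => S; apply/andP => -[_ /eqP phiST]; rewrite -phiST valid_phiS in vT.
Qed.

End Mirror.

Theorem proposition9p3 (D : diagram) (S : estate D) :
  valid S ->
  phiL (dtilde S) = dplus (phiS S) /\
  (forall T : estate (mirror D), dplus (phiS S) T != 0 ->
     [/\ Iidx T = - Iidx S - 2, Jidx T = - Jidx S &
         forall g : Cls D, Psi T g = - Psi S g]).
Proof.
move=> vS; split.
  apply/ffunP=> T; rewrite phiLE; case: ifP => vT; last first.
    apply/esym; apply: contraFeq vT => /dplus_neq0_incid[v].
    exact: incid_valid_r.
  rewrite -{2}(phiS_invK vT) !ffunE; apply: eq_bigr => v _.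
  by rewrite ffunE incid_phiS ?valid_phiS_inv // t_plus_phiS.
move=> T /dplus_neq0_incid[v incT].
split; first by rewrite (incid_Iidx incT) Iidx_phiS.
  by rewrite (incid_Jidx incT) Jidx_phiS.
by move=> g; rewrite (incid_Psi _ incT) Psi_phiS.
Qed.
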